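(* Let $F\subseteq E(H)$ with $|F|=\ell$. If there exist a tree embedding $(\mathcal T,\mathcal M,y)$ and a set of edges $E_b\subseteq E(\mathcal T)\setminus\mathcal M^{-1}(F)$ such that for every pair $(A,B)\in Z_F$ there is a path in $\mathcal T$ using only edges of $E_b$ connecting a leaf of $A$ to a leaf of $B$, then for every $i\in[q]$ the graph $(V,(E(H)\cup\mathcal M(E_b))\setminus F)$ contains a path from a vertex of $S_i$ to a vertex of $T_i$.
   Context: Standing setup. $G=(V,E)$ is an undirected graph with $n=|V|$, demand-pairs $(S_i,T_i)$, $i\in[q]$, of subsets of $V$. $\ell\ge1$ is an integer and $E_\ell\subseteq E$ an edge set such that in $(V,E_\ell)$ every $(S_i,T_i)$ is $\ell$-edge-connected. $x:E\to[0,1]$ satisfies $x_e=1$ for $e\in E_\ell$ and $\sum_{e\in\delta_G(X)}x_e\ge \ell+1$ for every $i\in[q]$ and every $X$ with $T_i\subseteq X\subseteq V\setminus S_i$. $\beta\ge1$ is a real. $\mathsf{LARGE}=\{e: x_e\ge 1/(4\ell\beta)\}$ and $H=(V,\mathsf{LARGE})$. Capacities: $\tilde x_e=1/(4\ell\beta)$ if $e\in\mathsf{LARGE}$; $\tilde x_e=0$ if $x_e<\frac{1}{2n^2}\cdot\frac1{4\ell\beta}$; $\tilde x_e=x_e$ otherwise. A tree embedding $(\mathcal T,\mathcal M,y)$ of $(G,\tilde x)$: $\mathcal T$ is a tree; $\mathcal M$ maps nodes of $\mathcal T$ to vertices of $G$ and is a bijection between leaves of $\mathcal T$ and $V$ (a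 vertex set of $G$ is identified with the corresponding leaf set); each tree edge $f=(u,v)$ is mapped to a path $\mathcal M(f)$ in $G$ between $\mathcal M(u)$ and $\mathcal M(v)$; $y(f)=\tilde x(\delta_G(X))$ where $(X,V\setminus X)$ is the leaf partition induced by $\mathcal T-f$. $\mathcal M^{-1}(e)=\{f: e\in\mathcal M(f)\}$, $\mathcal M^{-1}(F)=\bigcup_{e\in F}\mathcal M^{-1}(e)$, $\mathcal M(E')=\bigcup_{f\in E'}\mathcal M(f)$. Components: $\mathbb Q^F$ is the set of vertex sets of connected components of $(V,E(H)\setminus F)$; for nonempty $S\subseteq V$, $Q_S$ is the union of those components meeting $S$. A component $Q\in\mathbb Q^F$ is shattered (w.r.t. $\mathcal T$) if its leaves are not all in one connected component of $\mathcal T$ with the edges $\mathcal M^{-1}(F)$ removed, and intact otherwise. $\mathbb U^F_{\mathcal T}$ is the set of all partitions $(A',B')$ (parts may be empty) of the set of shattered components, and $Z_F=\{(A'\cup Q_{S_i},\,B'\cup Q_{T_i}) : (A',B')\in\mathbb U^F_{\mathcal T},\ i\in[q],\ Q_{S_i}\cap Q_{T_i}=\emptyset\}$, where $A'$, $B'$ are identified with the union of their components. *)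

From HB Require Import structures.
From mathcomp Require Import all_boot all_order all_algebra.
Set Implicit Arguments.
Unset Strict Implicit.
Unset Printing Implicit Defensive.
Import Order.TTheory GRing.Theory Num.Theory.

(* Undirected (multi)graphs: a finite vertex type V, a finite edge type E,
   and the two endpoints src e, dst e of each edge (orientation irrelevant). *)
Section Graph.
Variables (V E : finType) (src dst : E -> V).

Definition grel (D : {set E}) : rel V := fun u v =>
  [exists e in D, ((src e == u) && (dst e == v)) || ((src e == v) && (dst e == u))].

Definition gconnect (D : {set E}) : rel V := connect (grel D).

Definition cut (X : {set V}) : {set E} := [set e | (src e \in X) != (dst e \in X)].

Definition is_path (a b : V) (p : seq E) : Prop :=
  exists vs : seq V,
    [/\ size vs = (size p).+1, head a vs = a, last a vs = b, uniq vs &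
        forall (i : nat) (e0 : E) (v0 : V), (i < size p)%N ->
          let e := nth e0 p i in
          let u := nth v0 vs i in
          let w := nth v0 vs i.+1 in
          ((src e == u) && (dst e == w)) || ((src e == w) && (dst e == u))].

Definition comps (D : {set E}) : {set {set V}} :=
  [set [set w | gconnect D v w] | v : V].

Definition Qof (D : {set E}) (S : {set V}) : {set V} :=
  \bigcup_(Q in comps D | ~~ [disjoint Q & S]) Q.

Definition is_tree : Prop :=
  (forall u v, gconnect [set: E] u v) /\
  (forall f, ~~ gconnect (setT :\ f) (src f) (dst f)).

(* leaf: node of degree at most one (degree 0 only for the one-node tree) *)
Definition leaf (u : V) : bool := (#|[set f | (src f == u) || (dst f == u)]| <= 1)%N.

End Graph.

Section Setup.
Local Open Scope ring_scope.
Variables (R : realFieldType) (V E : finType) (src dst : E -> V).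

Definition large (x : E -> R) (l : nat) (beta : R) : {set E} :=
  [set e | (4%:R * l%:R * beta)^-1 <= x e].

Definition xtilde (x : E -> R) (l : nat) (beta : R) (e : E) : R :=
  if e \in large x l beta then (4%:R * l%:R * beta)^-1
  else if x e < ((2 * #|V| ^ 2)%:R)^-1 * (4%:R * l%:R * beta)^-1 then 0
  else x e.

Variables (N TE : finType) (tsrc tdst : TE -> N) (M : N -> V) (Mp : TE -> seq E).

(* leaf partition induced by T - f: vertices whose leaf is on the side of tsrc f *)
Definition side (f : TE) : {set V} :=
  [set v | [exists u, [&& leaf tsrc tdst u, M u == v &
                          gconnect tsrc tdst (setT :\ f) (tsrc f) u]]].

Definition tree_embedding (xt : E -> R) (y : TE -> R) : Prop :=
  [/\ is_tree tsrc tdst,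
      (forall v : V, exists! u : N, leaf tsrc tdst u /\ M u = v),
      (forall f, is_path src dst (M (tsrc f)) (M (tdst f)) (Mp f)) &
      (forall f, y f = \sum_(e in cut src dst (side f)) xt e)].

Definition Minv (F : {set E}) : {set TE} := [set f | [exists e in F, e \in Mp f]].
Definition Mimg (Eb : {set TE}) : {set E} := [set e | [exists f in Eb, e \in Mp f]].

(* component Q (of (V, E(H) \ F)) is intact: all its leaves lie in one
   component of T with M^{-1}(F) removed *)
Definition intact (F : {set E}) (Q : {set V}) : bool :=
  [forall u1, forall u2,
     [&& leaf tsrc tdst u1, leaf tsrc tdst u2, M u1 \in Q & M u2 \in Q] ==>
     gconnect tsrc tdst (~: Minv F) u1 u2].

Definition shattered (EH F : {set E}) : {set {set V}} :=
  [set Q in comps src dst (EH :\: F) | ~~ intact F Q].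

Definition inZF (EH F : {set E}) (q : nat) (S T : 'I_q -> {set V})
    (AB : {set V} * {set V}) : Prop :=
  exists A' : {set {set V}}, A' \subset shattered EH F /\
    exists i : 'I_q,
      [disjoint Qof src dst (EH :\: F) (S i) & Qof src dst (EH :\: F) (T i)] /\
      AB = (cover A' :|: Qof src dst (EH :\: F) (S i),
            cover (shattered EH F :\: A') :|: Qof src dst (EH :\: F) (T i)).

End Setup.

From Pilot Require Import Defs.
From HB Require Import structures.
From mathcomp Require Import all_boot all_order all_algebra.
Import Order.TTheory GRing.Theory Num.Theory.
Set Implicit Arguments.
Unset Strict Implicit.
Unset Printing Implicit Defensive.
Local Open Scope ring_scope.

(* Let C be the set of vertices reachable from S_i in G' = (E(H) u M(E_b)) \ F.
   If Q_{S_i} and Q_{T_i} meet we are done inside H - F.  Otherwise put into A'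
   exactly the shattered components contained in C; the resulting pair lies in
   Z_F, so some E_b-path of the tree joins a leaf of A' u Q_{S_i} (inside C) to a
   leaf of B' u Q_{T_i}.  Its image under M stays in G', hence that second leaf is
   in C too.  Components of H - F are connected in G', so a component meeting C
   lies in C; thus the leaf is not in B', so it is in Q_{T_i}, and we reach T_i. *)

Lemma connect_homo (T T' : finType) (e : rel T) (e' : rel T') (h : T -> T') :
  (forall x y, e x y -> connect e' (h x) (h y)) ->
  forall x y, connect e x y -> connect e' (h x) (h y).
Proof.
move=> he x y /connectP[p]; elim: p x => [|z p IHp] x /=; first by move=> _ ->.
by case/andP=> exz pz yz; apply: connect_trans (he _ _ exz) (IHp _ pz yz).
Qed.

Section Connectivity.
Variables (V E : finType) (src dst : E -> V).

Lemma grel_sym (D : {set E}) : symmetric (Defs.grel src dst D).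
Proof.
by move=> u v; apply/existsP/existsP => -[e /andP[eD he]]; exists e; rewrite eD orbC.
Qed.

Lemma gconnect_sym (D : {set E}) : symmetric (gconnect src dst D).
Proof. exact/sym_connect_sym/grel_sym. Qed.

Lemma gconnect_sub (D D' : {set E}) :
  D \subset D' -> subrel (gconnect src dst D) (gconnect src dst D').
Proof.
move=> sDD'; apply: connect_sub => u v /existsP[e /andP[eD he]].
by apply: connect1; apply/existsP; exists e; rewrite (subsetP sDD' _ eD).
Qed.

Lemma is_path_gconnect (D : {set E}) a b p :
  is_path src dst a b p -> {subset p <= D} -> gconnect src dst D a b.
Proof.
case=> vs [size_vs head_vs last_vs _ link] pD.
have reach_nth k : (k <= size p)%N -> gconnect src dst D a (nth a vs k).
  elim: k => [|k IHk] lt_k; first by rewrite nth0 head_vs; apply: connect0.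
  apply: connect_trans (IHk (ltnW lt_k)) (connect1 _); apply/existsP.
  case: p pD link lt_k {IHk size_vs} => // e0 p pD link lt_k.
  by exists (nth e0 (e0 :: p) k); rewrite pD ?mem_nth //; apply: link.
by have := reach_nth _ (leqnn _); rewrite -last_vs -nth_last size_vs.
Qed.

Lemma comps_gconnect (D : {set E}) Q u v :
  Q \in comps src dst D -> u \in Q -> v \in Q -> gconnect src dst D u v.
Proof.
case/imsetP=> w _ -> /[!inE] wu wv.
by rewrite gconnect_sym in wu; apply: connect_trans wu wv.
Qed.

Lemma mem_Qof (D : {set E}) (S : {set V}) v :
  v \in Qof src dst D S -> exists2 s, s \in S & gconnect src dst D v s.
Proof.
case/bigcupP=> Q /andP[compQ]; rewrite -setI_eq0 => /set0Pn[s /setIP[sQ sS]] vQ.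
by exists s; last exact: comps_gconnect compQ vQ sQ.
Qed.

Lemma Qof_meet_gconnect (D : {set E}) (S T : {set V}) :
  ~~ [disjoint Qof src dst D S & Qof src dst D T] ->
  exists s t, [/\ s \in S, t \in T & gconnect src dst D s t].
Proof.
rewrite -setI_eq0 => /set0Pn[v /setIP[/mem_Qof[s sS vs] /mem_Qof[t tT vt]]].
by exists s, t; split=> //; rewrite gconnect_sym in vs; apply: connect_trans vs vt.
Qed.

Definition reach (D : {set E}) (S : {set V}) : {set V} :=
  [set v | [exists s in S, gconnect src dst D s v]].

Lemma reach_gconnect (D : {set E}) (S : {set V}) u v :
  u \in reach D S -> gconnect src dst D u v -> v \in reach D S.
Proof.
rewrite !inE => /existsP[s /andP[sS su]] uv.
by apply/existsP; exists s; rewrite sS; apply: connect_trans su uv.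
Qed.

Lemma Qof_sub_reach (D D' : {set E}) (S : {set V}) :
  D \subset D' -> Qof src dst D S \subset reach D' S.
Proof.
move=> sDD'; apply/subsetP=> v /mem_Qof[s sS vs]; rewrite inE.
by apply/existsP; exists s; rewrite sS (gconnect_sub sDD') // gconnect_sym.
Qed.

Lemma comps_sub_reach (D D' : {set E}) (S : {set V}) Q v :
  D \subset D' -> Q \in comps src dst D -> v \in Q -> v \in reach D' S ->
  Q \subset reach D' S.
Proof.
move=> sDD' compQ vQ vC; apply/subsetP=> w wQ.
exact: reach_gconnect vC (gconnect_sub sDD' (comps_gconnect compQ vQ wQ)).
Qed.

End Connectivity.

Section TreeImage.
Variables (V E N TE : finType) (src dst : E -> V) (tsrc tdst : TE -> N).
Variables (M : N -> V) (Mp : TE -> seq E).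
Hypothesis Mp_path : forall f, is_path src dst (M (tsrc f)) (M (tdst f)) (Mp f).

Lemma gconnect_Mimg (Eb : {set TE}) u v :
  gconnect tsrc tdst Eb u v -> gconnect src dst (Mimg Mp Eb) (M u) (M v).
Proof.
apply: connect_homo => {}u {}v /existsP[f /andP[fEb uv]].
have Mf : gconnect src dst (Mimg Mp Eb) (M (tsrc f)) (M (tdst f)).
  apply: is_path_gconnect (Mp_path f) _ => e ef.
  by rewrite inE; apply/existsP; exists f; rewrite fEb.
by case/orP: uv => /andP[/eqP <- /eqP <-] //; rewrite gconnect_sym in Mf.
Qed.

Lemma Mimg_sub_setC (F : {set E}) (Eb : {set TE}) :
  Eb \subset ~: Minv Mp F -> Mimg Mp Eb \subset ~: F.
Proof.
move=> sEb; apply/subsetP=> e /[!inE] /existsP[f /andP[fEb ef]].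
have /[!inE] := subsetP sEb _ fEb; apply: contraNN => eF.
by apply/existsP; exists e; rewrite eF.
Qed.

End TreeImage.

Theorem lemma5p5
  (R : realFieldType) (V E : finType) (src dst : E -> V)
  (q : nat) (S T : 'I_q -> {set V})
  (l : nat) (El : {set E}) (x : E -> R) (beta : R)
  (N TE : finType) (tsrc tdst : TE -> N) (M : N -> V) (Mp : TE -> seq E)
  (y : TE -> R) (F : {set E}) (Eb : {set TE}) :
  (1 <= l)%N ->
  (forall (i : 'I_q) (X : {set V}), T i \subset X -> X \subset ~: S i ->
      (l <= #|cut src dst X :&: El|)%N) ->
  (forall e, 0 <= x e <= 1) ->
  (forall e, e \in El -> x e = 1) ->
  (forall (i : 'I_q) (X : {set V}), T i \subset X -> X \subset ~: S i ->
      l%:R + 1 <= \sum_(e in cut src dst X) x e) ->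
  1 <= beta ->
  tree_embedding src dst tsrc tdst M Mp (xtilde V x l beta) y ->
  F \subset large x l beta ->
  #|F| = l ->
  Eb \subset ~: Minv Mp F ->
  (forall AB : {set V} * {set V},
      inZF src dst tsrc tdst M Mp (large x l beta) F S T AB ->
      exists ua ub : N,
        [/\ leaf tsrc tdst ua, leaf tsrc tdst ub, M ua \in AB.1, M ub \in AB.2 &
            gconnect tsrc tdst Eb ua ub]) ->
  forall i : 'I_q, exists s t : V,
    [/\ s \in S i, t \in T i &
        gconnect src dst ((large x l beta :|: Mimg Mp Eb) :\: F) s t].
Proof.
move=> _ _ _ _ _ _ [_ _ Mp_path _] _ _ sEb Z_path i.
set H := large x l beta; set G' := (H :|: Mimg Mp Eb) :\: F.
set C := reach src dst G' (S i); set Sh := shattered src dst tsrc tdst M Mp H F.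
have sHG' : H :\: F \subset G' by rewrite setSD ?subsetUl.
have sEbG' : Mimg Mp Eb \subset G'.
  by rewrite /G' setDE subsetI subsetUr (Mimg_sub_setC sEb).
have [disjST|] := boolP [disjoint Qof src dst (H :\: F) (S i)
                                 & Qof src dst (H :\: F) (T i)]; last first.
  case/Qof_meet_gconnect=> s [t [sS tT st]].
  by exists s, t; split=> //; apply: (gconnect_sub sHG').
pose A' := [set Q in Sh | Q \subset C].
have [|ua [ub [_ _ uaA ubB uaub]]] := Z_path (cover A' :|: Qof src dst (H :\: F) (S i),
                                            cover (Sh :\: A') :|: Qof src dst (H :\: F) (T i)).
  by exists A'; split; [rewrite /A' setIdE subsetIl | exists i].
have uaC : M ua \in C.
  case/setUP: uaA => [/bigcupP[Q /setIdP[_ /subsetP QC] /QC] //|uaQ].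
  exact: subsetP (Qof_sub_reach src dst (S i) sHG') _ uaQ.
have ubC : M ub \in C.
  exact: reach_gconnect uaC (gconnect_sub sEbG' (gconnect_Mimg Mp_path uaub)).
case/setUP: ubB => [/bigcupP[Q /setDP[ShQ QnA'] ubQ]|/mem_Qof[t tT ubt]].
  have [compQ _] := setIdP ShQ; case/negP: QnA'; apply/setIdP; split=> //.
  exact: comps_sub_reach sHG' compQ ubQ ubC.
move: ubC; rewrite inE => /existsP[s /andP[sS sub]]; exists s, t; split=> //.
exact: connect_trans sub (gconnect_sub sHG' ubt).
Qed.
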